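(* If $T$ is a tree of order $n\geq 3$, then ${\chi^\Sigma_g}^\star(T)\leq 4$.
   Context: For an Abelian group $\mathcal{G}$ with identity $0$ and $f\colon E(T)\to\mathcal{G}$, $w_f(v)=\sum_{u\in N(v)}f(uv)$. ${\chi^\Sigma_g}^\star(T)$ is the least positive integer $k$ such that for every Abelian group $\mathcal{G}$ of order $k$ there exists $f\colon E(T)\to\mathcal{G}\setminus\{0\}$ with $w_f(u)\neq w_f(v)$ for every edge $uv$. *)

From HB Require Import structures.
From mathcomp Require Import all_boot all_order all_algebra.
Set Implicit Arguments. Unset Strict Implicit. Unset Printing Implicit Defensive.
Import GRing.Theory.
Local Open Scope ring_scope.

Definition simple_graph (T : finType) (e : rel T) : Prop :=
  symmetric e /\ irreflexive e.

Definition connected_graph (T : finType) (e : rel T) : Prop :=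
  forall x y : T, connect e x y.

Definition acyclic_graph (T : finType) (e : rel T) : Prop :=
  forall p : seq T, uniq p -> (3 <= size p)%N -> ~~ cycle e p.

Definition is_tree (T : finType) (e : rel T) : Prop :=
  [/\ simple_graph e, connected_graph e & acyclic_graph e].

(* Edge labelings are functions on 2-subsets {u,v}; only their values on
   edges matter. w_f(v) = sum of f(uv) over neighbours u of v. *)
Definition weight (T : finType) (e : rel T) (G : zmodType)
  (f : {set T} -> G) (v : T) : G :=
  \sum_(u | e v u) f [set u; v].

Definition good_labeling_exists (T : finType) (e : rel T) (G : zmodType) : Prop :=
  exists f : {set T} -> G,
    (forall u v, e u v -> f [set u; v] != 0) /\
    (forall u v, e u v -> weight e f u != weight e f v).

(* The defining property of chi^Sigma_g*(T) at order k: for every Abelian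
   group G of order k there is such a labeling. *)
Definition group_sum_good (T : finType) (e : rel T) (k : nat) : Prop :=
  forall G : finZmodType, #|G| = k -> good_labeling_exists e G.

From mathcomp Require Import all_boot all_order all_algebra.
Set Implicit Arguments. Unset Strict Implicit. Unset Printing Implicit Defensive.
Import GRing.Theory.
Local Open Scope ring_scope.

(* We prove more, for any group of order at least 4: if A is a set of
   vertices of a finite forest such that every edge inside A lies on a path of
   length two inside A, then the edges inside A have a good labelling; we
   induct on |A|.
   A longest path of A starts with a leaf l0 hanging at a vertex c all of
   whose neighbours but at most one, p, are leaves. If p has a further
   neighbour, delete the leaves at c; otherwise the component of c is a star
   and is deleted (and labelled on its own). The leaves at c are then
   relabelled: all of them get a common label y0 except one which gets z, so
   their weights take two values only, and four group elements leave room to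
   choose y0 and z nonzero with the new weight of c different from y0, z and
   the weight of p. *)

Lemma exists_notin (T : finType) (s : seq T) : (size s < #|T|)%N ->
  exists w, w \notin s.
Proof.
move=> lt_s_T; apply/existsP; rewrite -negb_forall.
apply: contraL lt_s_T => /forallP in_s; rewrite -leqNgt.
by apply: leq_trans (card_size s); apply/subset_leq_card/subsetP => w _.
Qed.

Lemma eq_set2 (T : finType) (u v a b : T) : a != b ->
  ([set u; v] == [set a; b]) = ((u == a) && (v == b)) || ((u == b) && (v == a)).
Proof.
move=> neq_ab; apply/eqP/idP => [uv_ab | /orP[] /andP[/eqP-> /eqP->] //].
  have /set2P a_uv : a \in [set u; v] by rewrite uv_ab set21.
  have /set2P b_uv : b \in [set u; v] by rewrite uv_ab set22.
  case: a_uv b_uv neq_ab => [->|->] [->|->]; by rewrite ?eqxx ?orbT.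
exact: setUC.
Qed.

Lemma card_setD_lt (T : finType) (A B : {set T}) a : a \in A -> a \in B ->
  (#|A :\: B| < #|A|)%N.
Proof.
move=> aA aB; apply: leq_ltn_trans (proper_card (properD1 aA)).
by apply/subset_leq_card/setDS; rewrite sub1set.
Qed.

Lemma exists_nonzero_shift (G : finZmodType) (x : G) n : (2 < #|G|)%N -> x != 0 ->
  exists2 y : G, y != 0 & x + y *+ n != 0.
Proof.
move=> G_gt2 x_neq0.
have [y] := @exists_notin _ [:: 0] (ltnW G_gt2); rewrite mem_seq1 => y_neq0.
have [y'] := @exists_notin _ [:: 0; - y] G_gt2.
rewrite !inE negb_or -addr_eq0 => /andP[y'_neq0 y'y_neq0].
have [xy|] := eqVneq (x + y *+ n) 0; last by exists y.
have [xy'|] := eqVneq (x + y' *+ n) 0; last by exists y'.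
(* If both y and y' fail, then y n = y' n = -x, and y' + y works. *)
exists (y' + y) => //.
move/eqP: xy; move/eqP: xy'; rewrite !(addrC x) !addr_eq0 => /eqP yn' /eqP yn.
by rewrite mulrnDl yn' yn -subr_eq0 opprK subrK oppr_eq0.
Qed.

(* x is the label of the edge c--p, F the weight of p, and n + 1 the number
   of leaves at c; the new weight of c is x + n y0 + z. *)
Lemma exists_star_labels (G : finZmodType) (x F : G) n : (3 < #|G|)%N -> x != 0 ->
  exists y0 z : G, [/\ y0 != 0, z != 0 & x + y0 *+ n + z \notin [:: F; y0; z]].
Proof.
move=> G_gt3 x_neq0.
have [y0 y0_neq0 s_neq0] := exists_nonzero_shift n (ltnW G_gt3) x_neq0.
set s := x + y0 *+ n in s_neq0 *.
have [z] := @exists_notin _ [:: 0; F - s; y0 - s] G_gt3.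
rewrite !inE => /norP[z_neq0 /norP[zF zy0]].
have sz_z : (s + z == z) = false.
  by rewrite -{2}[z]add0r (inj_eq (addIr z)) (negbTE s_neq0).
exists y0, z; split => //; rewrite -/s !inE sz_z orbF negb_or.
by apply/andP; split; [apply: contra zF | apply: contra zy0];
  move=> /eqP <-; rewrite addrAC subrr add0r.
Qed.

Section Labelings.
Variables (T : finType) (e : rel T) (G : zmodType).
Implicit Types (A B : {set T}) (f g : {set T} -> G).

Definition edge_label (a b : T) (y : G) (S : {set T}) : G :=
  if S == [set a; b] then y else 0.

Definition supported A f :=
  forall S, f S != 0 -> exists u v, [/\ S = [set u; v], u \in A, v \in A & e u v].

Definition good_on A f :=
  [/\ supported A f,
      {in A &, forall u v, e u v -> f [set u; v] != 0} &
      {in A &, forall u v, e u v -> weight e f u != weight e f v}].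

Lemma weightD f g v :
  weight e (fun S => f S + g S) v = weight e f v + weight e g v.
Proof. exact: big_split. Qed.

Lemma weight_sum (I : finType) (P : pred I) (F : I -> {set T} -> G) v :
  weight e (fun S => \sum_(i | P i) F i S) v = \sum_(i | P i) weight e (F i) v.
Proof. exact: exchange_big. Qed.

Lemma supported_set2 A f u v : supported A f -> u \notin A -> f [set u; v] = 0.
Proof.
move=> f_supp uA; apply/eqP; apply: contraNT uA => /f_supp[a [b [ab_uv aA bA _]]].
by have /set2P[->|->] : u \in [set a; b] by rewrite -ab_uv set21.
Qed.

Lemma weight_notin A f v : supported A f -> v \notin A -> weight e f v = 0.
Proof.
by move=> f_supp vA; apply: big1 => u _; rewrite setUC (supported_set2 _ f_supp).
Qed.

Lemma weight_unique_neighbour A f c p : supported A f -> e c p ->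
  {in A, forall u, e c u -> u = p} -> weight e f c = f [set p; c].
Proof.
move=> f_supp ecp c_nbr; rewrite /weight (bigD1 p) //= big1 ?addr0 // => u /andP[ecu up].
have [uA|uA] := boolP (u \in A); last exact: supported_set2 f_supp uA.
by rewrite (c_nbr u uA ecu) eqxx in up.
Qed.

Hypothesis e_sym : symmetric e.

Lemma good_onU A B f g : {in A & B, forall u v, ~~ e u v} ->
  good_on A f -> good_on B g -> good_on (A :|: B) (fun S => f S + g S).
Proof.
move=> AB [f_supp f_neq0 f_proper] [g_supp g_neq0 g_proper].
have sides : {in A :|: B &, forall u v, e u v ->
    [/\ u \in A, v \in A, u \notin B & v \notin B] \/
    [/\ u \in B, v \in B, u \notin A & v \notin A]}.
  move=> u v /setUP uAB /setUP vAB euv.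
  have [uA | uA] := boolP (u \in A); [left | right].
    have vB : v \notin B by apply: contraL euv => /(AB u v uA).
    have vA : v \in A by case: vAB vB => // ->.
    by split=> //; apply: contraL euv => /(AB v u vA); rewrite e_sym.
  have uB : u \in B by case: uAB uA => // ->.
  have vA : v \notin A by apply: contraL euv => /AB/(_ uB); rewrite e_sym.
  have vB : v \in B by case: vAB vA => // ->.
  by split.
split.
- move=> S; have [fS0 | /f_supp[u [v [-> uA vA euv]]]] := eqVneq (f S) 0.
    rewrite fS0 add0r => /g_supp[u [v [-> uB vB euv]]].
    by exists u, v; rewrite !inE uB vB !orbT.
  by exists u, v; rewrite !inE uA vA.
- move=> u v uAB vAB euv.
  case: (sides u v uAB vAB euv) => [[uA vA uB _] | [uB vB uA _]].
    by rewrite (supported_set2 _ g_supp uB) addr0 f_neq0.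
  by rewrite (supported_set2 _ f_supp uA) add0r g_neq0.
- move=> u v uAB vAB euv; rewrite !weightD.
  case: (sides u v uAB vAB euv) => [[uA vA uB vB] | [uB vB uA vA]].
    by rewrite !(weight_notin g_supp) // !addr0 f_proper.
  by rewrite !(weight_notin f_supp) // !add0r g_proper.
Qed.

Lemma weight_edge_label (a b : T) (y : G) v : e a b -> a != b ->
  weight e (edge_label a b y) v = y *+ ((v == a) + (v == b)).
Proof.
move=> eab neq_ab; rewrite /weight /edge_label.
under eq_bigr => u _ do rewrite eq_set2 //.
have [-> | va] := eqVneq v a.
  rewrite (negbTE neq_ab) (bigD1 b) //= eqxx orbT big1 ?addr0 //.
  by move=> u /andP[_ /negbTE->]; rewrite !andbF.
have [-> | vb] := eqVneq v b.
  rewrite (bigD1 a) 1?e_sym //= eqxx andbT big1 ?addr0 //.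
  by move=> u /andP[_ /negbTE->]; rewrite !andbF.
by rewrite big1 // => u _; rewrite !andbF.
Qed.

End Labelings.

Section Forests.
Variables (T : finType) (e : rel T).
Implicit Types (A B : {set T}).

Definition pendant A (l c : T) := {in A, forall w, e l w -> w = c}.

Definition no_isolated_edge A := {in A &, forall u v, e u v ->
  exists2 w, w \in A & (e u w && (w != v)) || (e v w && (w != u))}.

Lemma no_isolated_edge_closed A B : no_isolated_edge A -> B \subset A ->
  {in B & A, forall u w, e u w -> w \in B} -> no_isolated_edge B.
Proof.
move=> nice_A /subsetP BA B_closed u v uB vB euv.
have [w wA wuv] := nice_A u v (BA u uB) (BA v vB) euv.
exists w => //; case/orP: wuv => /andP[ew _].
  exact: B_closed uB wA ew.
exact: B_closed vB wA ew.
Qed.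

Lemma path_exit (S : {pred T}) x s :
  path e x s -> x \in S -> last x s \notin S ->
  exists a b, [/\ a \in S, b \notin S & e a b].
Proof.
elim: s x => [|y s IH] x /=; first by move=> _ ->.
case/andP=> exy ys xS; have [yS | yS] := boolP (y \in S); first exact: IH.
by exists x, y.
Qed.

Lemma connected_no_isolated_edge : connected_graph e -> (2 < #|T|)%N ->
  no_isolated_edge [set: T].
Proof.
move=> e_conn T_gt2 u v _ _ euv.
have [z] := @exists_notin _ [:: u; v] T_gt2; rewrite !inE => /norP[zu zv].
case/connectP: (e_conn u z) => s us z_last.
have z_out : last u s \notin [set u; v] by rewrite -z_last !inE negb_or zu zv.
have [a [b [/set2P ab_uv]]] := path_exit us (set21 u v) z_out.
rewrite !inE negb_or => /andP[bu bv] eab.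
by exists b; rewrite ?inE //; case: ab_uv eab => <- ->; rewrite ?bu ?bv ?orbT.
Qed.

Definition upath_in A x s := [&& uniq (x :: s), path e x s & all [in A] (x :: s)].

Definition longest_upath_in A x s :=
  upath_in A x s /\ forall y t, upath_in A y t -> (size t <= size s)%N.

Lemma exists_longest_upath A x s : upath_in A x s ->
  exists y t, longest_upath_in A y t.
Proof.
move=> xs.
(* Tuples make "some path of A has size n" a boolean predicate. *)
pose P n := [exists y, exists t : n.-tuple T, upath_in A y t].
have P_s : P (size s) by apply/existsP; exists x; apply/existsP; exists (in_tuple s).
have P_bound n : P n -> (n <= #|T|)%N.
  case/existsP=> y /existsP[t /and3P[/card_uniqP yt_card _ _]].
  by rewrite -(size_tuple t) ltnW // -[X in (X <= _)%N]/(size (y :: t)) -yt_card max_card.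
case: (ex_maxnP (ex_intro P _ P_s) P_bound) => m /existsP[y /existsP[t yt]] m_max.
exists y, t; split => // z r zr; rewrite size_tuple; apply: m_max.
by apply/existsP; exists z; apply/existsP; exists (in_tuple r).
Qed.

Hypotheses (e_sym : symmetric e) (e_irr : irreflexive e) (e_acyc : acyclic_graph e).

Lemma path_neighbour_head x s u : uniq (x :: s) -> path e x s -> u \in s -> e x u ->
  u = head x s.
Proof.
move=> xs_uniq xs_path us exu; have lt_u := us; rewrite -index_mem in lt_u.
case Ei: (index u s) lt_u => [|i] lt_i; first by rewrite -nth0 -Ei nth_index.
(* Otherwise x, s_0, ..., s_i, u is a cycle. *)
have take_u : take i.+2 s = rcons (take i.+1 s) u.
  by rewrite (take_nth x) // -Ei nth_index.
have cyc : cycle e (x :: take i.+2 s).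
  by rewrite /cycle rcons_path take_path //= take_u last_rcons e_sym.
have cyc_uniq : uniq (x :: take i.+2 s).
  move: xs_uniq => /= /andP[xs s_uniq]; rewrite take_uniq // andbT.
  by apply: contra xs; apply: mem_take.
have cyc_size : (3 <= size (x :: take i.+2 s))%N by rewrite /= size_takel // -Ei.
by move: (e_acyc cyc_uniq cyc_size); rewrite cyc.
Qed.

Lemma longest_upath_pendant A x s : longest_upath_in A x s -> pendant A x (head x s).
Proof.
case=> /and3P[xs_uniq xs_path xs_in] xs_max u uA exu.
have [us | us] := boolP (u \in s); first exact: path_neighbour_head.
have ux : u != x by apply: contraTneq exu => ->; rewrite e_irr.
have : upath_in A u (x :: s).
  apply/and3P; split; last by rewrite /= uA.
    by rewrite cons_uniq xs_uniq inE negb_or ux us.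
  by rewrite /= e_sym exu.
by move/xs_max; rewrite ltnn.
Qed.

Lemma exists_pendant_star A a b : a \in A -> b \in A -> e a b ->
  exists c l0 p, [/\ c \in A, l0 \in A, e c l0, pendant A l0 c &
    {in A, forall u, e c u -> u = p \/ pendant A u c}].
Proof.
move=> aA bA eab.
have ab : upath_in A a [:: b].
  rewrite /upath_in /= eab aA bA inE !andbT.
  by apply: contraTneq eab => ->; rewrite e_irr.
have [l0 [[|c s] longest]] := exists_longest_upath ab; first by have := longest.2 _ _ ab.
have l0_pendant := longest_upath_pendant longest.
case: (longest) => /and3P[/= /andP[l0cs cs_uniq] /andP[l0c s_path]].
move=> /and3P[l0A cA s_in] cs_max.
exists c, l0, (head c s); split; rewrite 1?e_sym //.
move=> u uA ecu; have [us | us] := boolP (u \in s).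
  by left; apply: path_neighbour_head.
right; have [-> // | ul0] := eqVneq u l0.
have uc : u != c by apply: contraTneq ecu => ->; rewrite e_irr.
(* u, c, s is a longest path as well. *)
apply: (@longest_upath_pendant A u (c :: s)); split => //.
by rewrite /upath_in /= e_sym ecu s_path uA cA s_in cs_uniq !inE negb_or uc us.
Qed.

End Forests.

Section PendantStarExtension.
Variables (T : finType) (e : rel T) (G : finZmodType).
Hypotheses (e_sym : symmetric e) (e_irr : irreflexive e).
Variables (A : {set T}) (c p : T).
Hypotheses (cA : c \in A) (pA : p \in A) (ecp : e c p).

Let L := [set u in A | e c u & u != p].

Hypothesis L_pendant : {in L, forall l, pendant e A l c}.
Variable f' : {set T} -> G.
Hypotheses (f'_supp : supported e (A :\: L) f')
  (f'_neq0 : {in A :\: L &, forall u v, e u v -> f' [set u; v] != 0})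
  (* the weight of c is recomputed, so f' need not be proper at c *)
  (f'_proper : {in A :\: L &, forall u v, e u v -> u != c -> v != c ->
     weight e f' u != weight e f' v}).

Let L_sub l : l \in L -> l \in A.
Proof. by rewrite inE => /andP[]. Qed.

Let L_edge l : l \in L -> e l c.
Proof. by rewrite inE e_sym => /and3P[]. Qed.

Let L_neq_c l : l \in L -> l != c.
Proof. by move/L_edge; apply: contraTneq => ->; rewrite e_irr. Qed.

Let p_neq_c : p != c.
Proof. by apply: contraTneq ecp => ->; rewrite e_irr. Qed.

Let c_notin_L : c \notin L.
Proof. by rewrite inE e_irr andbF. Qed.

Let p_notin_L : p \notin L.
Proof. by rewrite inE eqxx !andbF. Qed.

Let c_neighbour : {in A :\: L, forall u, e c u -> u = p}.
Proof.
move=> u /setDP[uA uL] ecu; apply/eqP; apply: contraNT uL => up.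
by rewrite inE uA ecu up.
Qed.

Section LeafLabels.
Variable y : T -> G.

Let f S := f' S + \sum_(l in L) edge_label l c (y l) S.

Let f_leaf l : l \in L -> f [set l; c] = y l.
Proof.
move=> lL; have l_out : l \notin A :\: L by rewrite inE lL.
rewrite /f (supported_set2 _ f'_supp l_out) add0r (bigD1 l) //= /edge_label eqxx.
rewrite big1 ?addr0 // => k /andP[kL kl].
by rewrite eq_set2 ?L_neq_c // [l == k]eq_sym (negbTE kl) (negbTE (L_neq_c lL)).
Qed.

Let f_off u v : u \notin L -> v \notin L -> f [set u; v] = f' [set u; v].
Proof.
move=> uL vL; rewrite /f big1 ?addr0 // => l lL.
have ul : u != l by apply: contraNneq uL => ->.
have vl : v != l by apply: contraNneq vL => ->.
by rewrite /edge_label eq_set2 ?L_neq_c // (negbTE ul) (negbTE vl) andbF.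
Qed.

Let weight_f v :
  weight e f v = weight e f' v + \sum_(l in L) y l *+ ((v == l) + (v == c)).
Proof.
rewrite weightD weight_sum; congr (_ + _); apply: eq_bigr => l lL.
by rewrite weight_edge_label ?L_edge ?L_neq_c.
Qed.

Let weight_leaf l : l \in L -> weight e f l = y l.
Proof.
move=> lL; have l_out : l \notin A :\: L by rewrite inE lL.
rewrite weight_f (weight_notin f'_supp l_out) add0r.
rewrite (bigD1 l) //= eqxx (negbTE (L_neq_c lL)) mulr1n big1 ?addr0 // => k /andP[_ kl].
by rewrite [l == k]eq_sym (negbTE kl).
Qed.

Let weight_center : weight e f c = f' [set p; c] + \sum_(l in L) y l.
Proof.
rewrite weight_f (weight_unique_neighbour f'_supp ecp c_neighbour); congr (_ + _).
by apply: eq_bigr => l lL; rewrite eqxx eq_sym (negbTE (L_neq_c lL)) mulr1n.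
Qed.

Let weight_off v : v \notin L -> v != c -> weight e f v = weight e f' v.
Proof.
move=> vL vc; rewrite weight_f big1 ?addr0 // => l lL.
have vl : v != l by apply: contraNneq vL => ->.
by rewrite (negbTE vl) (negbTE vc).
Qed.

Let f_supp : supported e A f.
Proof.
move=> S; have [f'S | /f'_supp[u [v [-> /setDP[uA _] /setDP[vA _] euv]]]] :=
  eqVneq (f' S) 0; last by exists u, v.
have [l /andP[lL /eqP ->] | no_leaf] := pickP [pred l | (l \in L) && (S == [set l; c])].
  by exists l, c; rewrite L_sub ?L_edge.
rewrite /f f'S add0r big1 ?eqxx // => l lL.
by rewrite /edge_label; have := no_leaf l; rewrite /= lL /= => ->.
Qed.

Hypothesis y_neq0 : {in L, forall l, y l != 0}.
Let W := f' [set p; c] + \sum_(l in L) y l.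
Hypothesis W_neq_p : W != weight e f' p.
Hypothesis W_neq_leaf : {in L, forall l, W != y l}.

Lemma good_on_leaf_labels : good_on e A f.
Proof.
have leaf_or_center u v : u \in A -> v \in A -> e u v -> (u \in L) || (u == c) ->
    f [set u; v] != 0 /\ weight e f u != weight e f v.
  move=> uA vA euv /orP[uL | /eqP uc].
    rewrite (L_pendant uL vA euv) f_leaf // weight_leaf // weight_center.
    by rewrite y_neq0 // eq_sym W_neq_leaf.
  rewrite uc weight_center in euv *.
  have [vL | vL] := boolP (v \in L).
    by rewrite setUC f_leaf // weight_leaf // y_neq0 // W_neq_leaf.
  have vp : v = p by apply: c_neighbour; rewrite // inE vL.
  rewrite vp weight_off // setUC f_off //.
  by rewrite f'_neq0 1?e_sym // inE ?c_notin_L ?p_notin_L.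
have edge_ok u v : u \in A -> v \in A -> e u v ->
    f [set u; v] != 0 /\ weight e f u != weight e f v.
  move=> uA vA euv.
  have [uLc | uLc] := boolP ((u \in L) || (u == c)); first exact: leaf_or_center.
  have [vLc | vLc] := boolP ((v \in L) || (v == c)).
    have evu : e v u by rewrite e_sym.
    case: (leaf_or_center v u vA uA evu vLc) => fvu wvu.
    by rewrite setUC fvu eq_sym wvu.
  move: uLc vLc; rewrite !negb_or => /andP[uL uc] /andP[vL vc].
  by rewrite f_off // !weight_off // f'_neq0 ?f'_proper // inE ?uL ?vL.
by split=> // u v uA vA euv; case: (edge_ok u v uA vA euv).
Qed.

End LeafLabels.

Lemma good_on_pendant_star (l1 : T) : (3 < #|G|)%N -> l1 \in L ->
  exists f : {set T} -> G, good_on e A f.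
Proof.
move=> G_gt3 l1L.
have x_neq0 : f' [set p; c] != 0.
  by rewrite f'_neq0 1?e_sym // inE ?c_notin_L ?p_notin_L.
have [y0 [z [y0_neq0 z_neq0]]] :=
  exists_star_labels (weight e f' p) #|L :\ l1| G_gt3 x_neq0.
rewrite !inE => /norP[W_p /norP[W_y0 W_z]].
pose y l := if l == l1 then z else y0.
have sum_y : \sum_(l in L) y l = z + y0 *+ #|L :\ l1|.
  rewrite (bigD1 l1) //= /y eqxx; congr (_ + _); rewrite -sumr_const.
  by apply: eq_big => [l | l /andP[_ /negbTE ->]] //; rewrite !inE andbC.
exists (fun S => f' S + \sum_(l in L) edge_label l c (y l) S).
apply: good_on_leaf_labels => [l _ | | l _]; first by rewrite /y; case: ifP.
  by rewrite sum_y addrA addrAC.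
by rewrite sum_y addrA addrAC /y; case: ifP.
Qed.

End PendantStarExtension.

Section NoIsolatedEdge.
Variables (T : finType) (e : rel T) (G : finZmodType).
Hypotheses (e_sym : symmetric e) (e_irr : irreflexive e) (e_acyc : acyclic_graph e).
Hypothesis G_gt3 : (3 < #|G|)%N.
Implicit Type A : {set T}.

Definition closed_nbhd A c := [set u in A | (u == c) || e c u].

Lemma no_isolated_edge_remove_leaves A c p q :
  no_isolated_edge e A -> p \in A -> e c p -> q \in A -> e p q -> q != c ->
  {in [set u in A | e c u & u != p], forall l, pendant e A l c} ->
  no_isolated_edge e (A :\: [set u in A | e c u & u != p]).
Proof.
set L := [set u in A | _ & _] => nice_A pA ecp qA epq qc L_pendant.
move=> u v /setDP[uA uL] /setDP[vA vL] euv.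
have [w wA wuv] := nice_A u v uA vA euv.
have [wL | wL] := boolP (w \in L); last by exists w; rewrite // inE wL.
have c_nbr x : x \in A -> x \notin L -> e c x -> x = p.
  by move=> xA xL ecx; apply/eqP; apply: contraNT xL => xp; rewrite inE xA ecx xp.
have qL : q \notin L.
  apply: contraTN ecp => /(L_pendant q)/(_ p pA); rewrite e_sym => /(_ epq) ->.
  by rewrite e_irr.
(* w is a leaf at c, so the edge is c--p and q extends it. *)
exists q; first by rewrite inE qL.
case/orP: wuv => /andP[ew _].
  have uc : u = c by apply: (L_pendant w wL u uA); rewrite e_sym.
  have vp : v = p by apply: c_nbr; rewrite // -uc.
  by rewrite uc vp epq qc orbT.
have vc : v = c by apply: (L_pendant w wL v vA); rewrite e_sym.
have up : u = p by apply: c_nbr; rewrite // -vc e_sym.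
by rewrite vc up epq qc.
Qed.

Lemma closed_nbhd_component A c : {in A, forall u, e c u -> pendant e A u c} ->
  {in A :\: closed_nbhd A c & A, forall u w, e u w -> w \in A :\: closed_nbhd A c}.
Proof.
move=> c_pendant u w /setDP[uA uN] wA euw; rewrite inE wA andbT.
apply: contra uN; rewrite !inE wA => /orP[/eqP wc | ecw].
  by rewrite uA -wc e_sym euw orbT.
by rewrite uA (c_pendant w wA ecw u uA) ?eqxx // e_sym.
Qed.

Lemma good_on_closed_nbhd A c l0 : no_isolated_edge e A -> c \in A -> l0 \in A ->
  e c l0 -> {in A, forall u, e c u -> pendant e A u c} ->
  exists g : {set T} -> G, good_on e (closed_nbhd A c) g.
Proof.
set N := closed_nbhd A c => nice_A cA l0A ecl0 c_pendant.
have [l1 l1A /andP[ecl1 l1l0]] : exists2 l1, l1 \in A & e c l1 && (l1 != l0).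
  have [w wA /orP[] /andP[ew wne]] := nice_A c l0 cA l0A ecl0.
    by exists w; rewrite ?ew ?wne.
  by rewrite (c_pendant l0 l0A ecl0 w wA ew) eqxx in wne.
have N_sub : {subset N <= A} by move=> u; rewrite inE => /andP[].
have cN : c \in N by rewrite inE cA eqxx.
have l0N : l0 \in N by rewrite inE l0A ecl0 orbT.
set L := [set u in N | e c u & u != l0].
have L_pendant : {in L, forall l, pendant e N l c}.
  move=> l; rewrite inE => /and3P[lN ecl _] w /N_sub wA.
  exact: c_pendant (N_sub l lN) ecl w wA.
have l1L : l1 \in L by rewrite !inE l1A ecl1 l1l0 orbT.
have NL_c_l0 u : u \in N :\: L -> (u == c) || (u == l0).
  rewrite !inE => /andP[uL /andP[uA /orP[-> // | ecu]]].
  by move: uL; rewrite uA ecu /= orbT /= negbK => ->; rewrite orbT.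
have l0_out : l0 \in N :\: L by rewrite in_setD in_set l0N eqxx !andbF.
have c_out : c \in N :\: L by rewrite in_setD in_set cN e_irr !andbF.
have [x] := @exists_notin _ [:: 0 : G] (ltnW (ltnW G_gt3)); rewrite mem_seq1 => x_neq0.
(* N is a pendant star at c with p := l0, starting from a single label on c--l0. *)
apply: (@good_on_pendant_star _ _ _ e_sym e_irr N c l0 cN l0N ecl0 L_pendant
  (edge_label l0 c x) _ _ _ l1) => //.
- move=> S; rewrite /edge_label.
  case: (S =P [set l0; c]) => [-> _ | _]; last by rewrite eqxx.
  by exists l0, c; rewrite e_sym ecl0 l0_out c_out.
- move=> u v /NL_c_l0/orP[]/eqP-> /NL_c_l0/orP[]/eqP->; rewrite ?e_irr // => _.
    by rewrite /edge_label setUC eqxx.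
  by rewrite /edge_label eqxx.
- by move=> u v /NL_c_l0/orP[]/eqP-> /NL_c_l0/orP[]/eqP->; rewrite ?e_irr ?eqxx.
Qed.

Section InductionStep.
Variables (A : {set T}) (c l0 : T).
Hypotheses (nice_A : no_isolated_edge e A)
  (cA : c \in A) (l0A : l0 \in A) (ecl0 : e c l0).
Hypothesis IH : forall B : {set T}, (#|B| < #|A|)%N -> no_isolated_edge e B ->
  exists f : {set T} -> G, good_on e B f.

Lemma good_on_remove_leaves p q : pendant e A l0 c ->
  {in A, forall u, e c u -> u = p \/ pendant e A u c} ->
  p \in A -> e c p -> q \in A -> e p q -> q != c ->
  exists f : {set T} -> G, good_on e A f.
Proof.
move=> l0_pendant c_nbr pA ecp qA epq qc.
have L_pendant : {in [set u in A | e c u & u != p], forall l, pendant e A l c}.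
  move=> l; rewrite inE => /and3P[lA ecl lp].
  by case: (c_nbr l lA ecl) => // lp'; rewrite lp' eqxx in lp.
have l0L : l0 \in [set u in A | e c u & u != p].
  rewrite inE l0A ecl0; apply: contra qc => /eqP l0p.
  by apply/eqP/l0_pendant; rewrite // l0p.
have [f' [f'_supp f'_neq0 f'_proper]] := IH (card_setD_lt l0A l0L)
  (no_isolated_edge_remove_leaves nice_A pA ecp qA epq qc L_pendant).
apply: (good_on_pendant_star e_sym e_irr cA pA ecp L_pendant f'_supp f'_neq0 _ G_gt3 l0L).
by move=> u v uA vA euv _ _; apply: f'_proper.
Qed.

Lemma good_on_remove_star : {in A, forall u, e c u -> pendant e A u c} ->
  exists f : {set T} -> G, good_on e A f.
Proof.
set N := closed_nbhd A c => c_pendant.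
have N_sub : N \subset A by apply/subsetP => u; rewrite inE => /andP[].
have cN : c \in N by rewrite inE cA eqxx.
have N_closed := closed_nbhd_component c_pendant.
have [g g_good] := good_on_closed_nbhd nice_A cA l0A ecl0 c_pendant.
have [f' f'_good] := IH (card_setD_lt cA cN)
  (no_isolated_edge_closed nice_A (subsetDl A N) N_closed).
exists (fun S => g S + f' S); rewrite -(setID A N) (setIidPr N_sub).
apply: good_onU => // u v uN vAN; apply/negP => euv.
have := N_closed v u vAN (subsetP N_sub u uN); rewrite e_sym => /(_ euv).
by rewrite inE uN.
Qed.

End InductionStep.

Theorem no_isolated_edge_good_on A : no_isolated_edge e A ->
  exists f : {set T} -> G, good_on e A f.
Proof.
have [n] := ubnP #|A|; elim: n A => // n IH A /ltnSE A_le nice_A.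
have IH' (B : {set T}) : (#|B| < #|A|)%N -> no_isolated_edge e B ->
    exists f : {set T} -> G, good_on e B f.
  by move=> B_lt; apply: IH; apply: leq_trans B_lt A_le.
have [[a b] /and3P[/= aA bA eab] | no_edge] :=
  pickP [pred ab : T * T | [&& ab.1 \in A, ab.2 \in A & e ab.1 ab.2]]; last first.
  exists (fun=> 0); split=> [S | u v uA vA euv | u v uA vA euv]; rewrite ?eqxx //;
    by have := no_edge (u, v); rewrite /= uA vA euv.
have [c [l0 [p [cA l0A ecl0 l0_pendant c_nbr]]]] :=
  exists_pendant_star e_sym e_irr e_acyc aA bA eab.
have [/and3P[pA ecp /exists_inP[q qA /andP[epq qc]]] | p_end] :=
  boolP [&& p \in A, e c p & [exists q in A, e p q && (q != c)]].
  exact: good_on_remove_leaves l0_pendant c_nbr pA ecp qA epq qc.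
apply: good_on_remove_star nice_A cA l0A ecl0 IH' _ => u uA ecu.
case: (c_nbr u uA ecu) => // up; rewrite {}up in uA ecu *.
move=> w wA epw; apply/eqP; apply: contraNT p_end => wc.
by rewrite uA ecu; apply/exists_inP; exists w; rewrite ?epw.
Qed.

End NoIsolatedEdge.

Theorem corollary4 (T : finType) (e : rel T) :
  is_tree e -> (3 <= #|T|)%N ->
  exists k : nat, [/\ (0 < k)%N, (k <= 4)%N & group_sum_good e k].
Proof.
case=> [[e_sym e_irr] e_conn e_acyc] T_ge3; exists 4%N; split=> // G G_card.
have G_gt3 : (3 < #|G|)%N by rewrite G_card.
have [f [_ f_neq0 f_proper]] := no_isolated_edge_good_on e_sym e_irr e_acyc G_gt3
  (connected_no_isolated_edge e_conn T_ge3).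
by exists f; split=> u v euv; [apply: f_neq0 | apply: f_proper]; rewrite ?inE.
Qed.
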